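(* Let $\mathcal{A}=\{A_i\}_{i=0}^p$ be a set of $n\times n$ matrices and let $P_{\mathcal{A}}(\lambda)=\sum_{i=0}^{p}\lambda^i A_i$. Let $(\lambda_j,x_j)$, $j=1,\dots,n$, be $n$ eigenpairs of $P_{\mathcal{A}}(\lambda)$, and put $X=[x_1,\dots,x_n]$, $T=\operatorname{diag}(\lambda_1,\dots,\lambda_n)$. Assume that $X$ is nonsingular and that the geometric multiplicity of each of $\lambda_1,\dots,\lambda_n$ (as an eigenvalue of $P_{\mathcal{A}}$) equals one. If $(\tau_n,W)$ solves the GJBD problem of $\mathcal{A}$, then there exist a permutation matrix $\Pi$ and a nonsingular matrix $D\in\mathbb{D}_{\tau_n}$ such that $WD=X\Pi$; i.e., $(\tau_n,X\Pi)$ also solves the GJBD problem (in particular $(X\Pi)^{\star}A_i(X\Pi)\in\mathbb{D}_{\tau_n}$ for all $i=0,\dots,p$).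
   Context: A partition of a positive integer $n$ is a tuple $\tau_n=(n_1,\dots,n_t)$ of positive integers with $\sum_i n_i=n$; its cardinality is $\operatorname{card}(\tau_n)=t$. For an $n\times n$ matrix $A$ partitioned into blocks $A_{jk}$ of size $n_j\times n_k$, $\operatorname{Bdiag}_{\tau_n}(A)=\operatorname{diag}(A_{11},\dots,A_{tt})$ and $\operatorname{OffBdiag}_{\tau_n}(A)=A-\operatorname{Bdiag}_{\tau_n}(A)$; $A$ is $\tau_n$-block diagonal if $\operatorname{OffBdiag}_{\tau_n}(A)=0$, and $\mathbb{D}_{\tau_n}$ denotes the set of $\tau_n$-block diagonal matrices. The coefficient matrices $A_i$ all lie in one of $\mathbb{A}_n\in\{$real symmetric, complex Hermitian, $\mathbb{R}^{n\times n}$, $\mathbb{C}^{n\times n}\}$, and diagonalizers are sought in a class $\mathbb{W}_n\in\{$real orthogonal, unitary, real nonsingular, complex nonsingular $n\times n$ matrices$\}$; $(\cdot)^{\star}$ denotes transpose for real matrices and conjugate transpose for complex matrices. The JBD problem for a partition $\tau_n$: find $W\in\mathbb{W}_n$ with $W^{\star}A_iW\in\mathbb{D}_{\tau_n}$ for all $i=0,\dots,p$. The GJBD problem: find a partition $\tau_n'$ and $W=W(\tau_n')\in\mathbb{W}_n$ solving the JBD problem for $\tau_n'$ such that $\operatorname{card}(\tau_n')$ is maximal among all partitions for which the JBD problem is solvable; such a pair $(\tau_n',W)$ is called a solution of the GJBD problem. An eigenpair $(\lambda,x)$ of $P(\lambda)$ satisfies $\det P(\lambda)=0$, $x\neq 0$,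 $P(\lambda)x=0$; the geometric multiplicity of $\lambda$ is $\dim\ker P(\lambda)$. *)

(* Matrices over a numeric algebraically closed field C
   (e.g. algC, or complex R); real matrices are those with real entries. *)
From HB Require Import structures.
From mathcomp Require Import all_boot all_order all_algebra all_fingroup.
Set Implicit Arguments. Unset Strict Implicit. Unset Printing Implicit Defensive.
Import Order.TTheory GRing.Theory Num.Theory.
Local Open Scope ring_scope.

Section Defs.
Variable C : numClosedFieldType.

Definition ctrans (m k : nat) (A : 'M[C]_(m, k)) : 'M[C]_(k, m) :=
  map_mx Num.conj A^T.

Definition real_mx (m k : nat) (A : 'M[C]_(m, k)) : Prop :=
  forall i j, A i j \is Num.real.

Definition is_partition (n : nat) (tau : seq nat) : Prop :=
  all (fun k => 0 < k)%N tau /\ sumn tau = n.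

(* index (0-based) of the block containing row/column i *)
Definition blk (tau : seq nat) (i : nat) : nat :=
  count (fun k => sumn (take k.+1 tau) <= i)%N (iota 0 (size tau)).

Definition bdiag (n : nat) (tau : seq nat) (A : 'M[C]_n) : Prop :=
  forall i j : 'I_n, blk tau i <> blk tau j -> A i j = 0.

Inductive Aclass := RealSym | Hermitian | RealGen | ComplexGen.
Inductive Wclass := RealOrth | Unitary | RealNonsing | ComplexNonsing.

Definition inA (c : Aclass) (n : nat) (A : 'M[C]_n) : Prop :=
  match c with
  | RealSym => real_mx A /\ A^T = A
  | Hermitian => ctrans A = A
  | RealGen => real_mx A
  | ComplexGen => True
  end.

Definition inW (c : Wclass) (n : nat) (W : 'M[C]_n) : Prop :=
  match c with
  | RealOrth => real_mx W /\ W^T *m W = 1%:M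
  | Unitary => ctrans W *m W = 1%:M
  | RealNonsing => real_mx W /\ W \in unitmx
  | ComplexNonsing => W \in unitmx
  end.

Definition JBD_sol (cw : Wclass) (n p : nat) (A : 'I_p.+1 -> 'M[C]_n)
  (tau : seq nat) (W : 'M[C]_n) : Prop :=
  inW cw W /\ forall i, bdiag tau (ctrans W *m A i *m W).

Definition GJBD_sol (cw : Wclass) (n p : nat) (A : 'I_p.+1 -> 'M[C]_n)
  (tau : seq nat) (W : 'M[C]_n) : Prop :=
  [/\ is_partition n tau, JBD_sol cw A tau W &
      forall tau', is_partition n tau' -> (exists W', JBD_sol cw A tau' W') ->
        (size tau' <= size tau)%N].

Definition Pmat (n p : nat) (A : 'I_p.+1 -> 'M[C]_n) (lam : C) : 'M[C]_n :=
  \sum_(i < p.+1) lam ^+ i *: A i.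

Definition eigenpair (n p : nat) (A : 'I_p.+1 -> 'M[C]_n) (lam : C)
  (x : 'cV[C]_n) : Prop :=
  [/\ \det (Pmat A lam) = 0, x != 0 & Pmat A lam *m x = 0].

(* dim ker P(lam): the column space of cokermx M is {v | M v = 0} *)
Definition geom_mult (n p : nat) (A : 'I_p.+1 -> 'M[C]_n) (lam : C) : nat :=
  \rank (cokermx (Pmat A lam)).

Definition is_perm_matrix (n : nat) (Pi : 'M[C]_n) : Prop :=
  exists s : 'S_n, Pi = perm_mx s.

End Defs.

From HB Require Import structures.
From mathcomp Require Import all_boot all_order all_algebra all_fingroup.
Import Order.TTheory GRing.Theory Num.Theory.
Set Implicit Arguments. Unset Strict Implicit. Unset Printing Implicit Defensive.
Local Open Scope ring_scope.

(* Put Y := W^-1 X.  Column j of Y lies in the kernel of the congruent pencil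
   value W^* P(lambda_j) W, which is tau-block diagonal and has a
   one-dimensional kernel.  The kernel of a block-diagonal matrix contains
   the block components of each of its elements, so a one-dimensional kernel
   forces every kernel vector to be supported in a single block: each column
   of Y lives in one block.  Since Y is nonsingular, some permutation s has
   Y i (s i) <> 0 for all i, and permuting the columns of Y by s puts the
   block of each column on the diagonal, giving a nonsingular tau-block
   diagonal D = Y Pi with W D = X Pi. *)

Section LinearAlgebra.
Variable F : fieldType.

Lemma mxrank_unit_mul n (U M V : 'M[F]_n) :
  U \in unitmx -> V \in unitmx -> \rank (U *m M *m V) = \rank M.
Proof.
by move=> hU hV; rewrite mxrankMfree ?row_free_unit // eqmxMfull // row_full_unit.
Qed.

Lemma ker_rank1_proportional n (M : 'M[F]_n) (u v : 'cV[F]_n) :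
  (n - \rank M <= 1)%N -> M *m u = 0 -> M *m v = 0 -> v != 0 ->
  exists a, u = a *: v.
Proof.
move=> hrk hu hv v_neq0.
have inK (w : 'cV_n) : M *m w = 0 -> (w^T <= kermx M^T)%MS.
  by move=> hw; apply/sub_kermxP; rewrite -trmx_mul hw trmx0.
have K_sub_v : (kermx M^T <= v^T)%MS.
  rewrite -(geq_leqif (mxrank_leqif_sup (inK v hv))) mxrank_ker mxrank_tr.
  by rewrite rank_rV trmx_eq0 v_neq0.
have /sub_rVP[a hua] := submx_trans (inK u hu) K_sub_v.
by exists a; rewrite -[u]trmxK hua linearZ /= trmxK.
Qed.

Lemma unitmx_perm_support n (Y : 'M[F]_n) :
  Y \in unitmx -> exists s : 'S_n, forall i, Y i (s i) != 0.
Proof.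
move=> hY; have [s hs] : exists s : 'S_n, \prod_i Y i (s i) != 0.
  apply/existsP; apply: contraLR hY => /existsPn hs.
  rewrite unitmxE unitfE negbK /determinant; apply/eqP/big1 => t _.
  by move/negPn/eqP: (hs t) ->; rewrite mulr0.
by exists s => i; move/prodf_neq0: hs; apply.
Qed.

End LinearAlgebra.

Section BlockDiagonal.
Variables (C : numClosedFieldType) (n : nat) (tau : seq nat).

Lemma bdiag_mul (M N : 'M[C]_n) :
  bdiag tau M -> bdiag tau N -> bdiag tau (M *m N).
Proof.
move=> hM hN i j hij; rewrite mxE; apply: big1 => k _.
have [hk|hk] := eqVneq (blk tau k) (blk tau i).
  by rewrite hN ?mulr0 // hk.
by rewrite hM ?mul0r // => e; rewrite e eqxx in hk.
Qed.

Lemma bdiag_ctrans (M : 'M[C]_n) : bdiag tau M -> bdiag tau (ctrans M).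
Proof. by move=> hM i j hij; rewrite !mxE hM ?rmorph0 // => /esym. Qed.

Lemma bdiag_col_perm (Y : 'M[C]_n) (s : 'S_n) :
  (forall j i i', Y i j != 0 -> Y i' j != 0 -> blk tau i = blk tau i') ->
  (forall k, Y k (s k) != 0) -> bdiag tau (col_perm s Y).
Proof.
move=> col_in_block hs i k hik; rewrite mxE; apply/eqP/negPn/negP => hY.
exact/hik/(col_in_block (s k) i k hY (hs k)).
Qed.

Definition blk_part (b : nat) (y : 'cV[C]_n) : 'cV[C]_n :=
  \col_k (if blk tau k == b then y k 0 else 0).

Lemma bdiag_mul_blk_part (M : 'M[C]_n) b y :
  bdiag tau M -> M *m blk_part b y = blk_part b (M *m y).
Proof.
move=> hM; apply/matrixP => r c; rewrite ord1 !mxE.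
have [hr|hr] := eqVneq (blk tau r) b.
  apply: eq_bigr => k _; rewrite mxE.
  have [//|hk] := eqVneq (blk tau k) b.
  by rewrite mulr0 hM ?mul0r // hr => e; rewrite e eqxx in hk.
apply: big1 => k _; rewrite mxE.
have [hk|//] := eqVneq (blk tau k) b; last by rewrite mulr0.
by rewrite hM ?mul0r // hk; apply/eqP.
Qed.

Lemma bdiag_ker_rank1_block (M : 'M[C]_n) (y : 'cV[C]_n) i i' :
  bdiag tau M -> (n - \rank M <= 1)%N -> M *m y = 0 ->
  y i 0 != 0 -> y i' 0 != 0 -> blk tau i = blk tau i'.
Proof.
move=> hM hrk hy yi yi'; apply/eqP/negPn/negP => hne.
have ker_part b : M *m blk_part b y = 0.
  rewrite bdiag_mul_blk_part // hy; apply/matrixP => k c.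
  by rewrite !mxE; case: ifP.
have part_neq0 : blk_part (blk tau i') y != 0.
  by apply: contra yi' => /eqP/matrixP/(_ i' 0); rewrite !mxE eqxx => ->.
have [a /matrixP/(_ i 0)] :=
  ker_rank1_proportional hrk (ker_part (blk tau i)) (ker_part _) part_neq0.
by rewrite !mxE eqxx (negPf hne) mulr0 => yi0; rewrite yi0 eqxx in yi.
Qed.

End BlockDiagonal.

Section Congruence.
Variables (C : numClosedFieldType) (n : nat).
Implicit Types (M W : 'M[C]_n).

Lemma ctransM M W : ctrans (M *m W) = ctrans W *m ctrans M.
Proof. by rewrite /ctrans trmx_mul map_mxM. Qed.

Lemma ctrans_unitmx W : W \in unitmx -> ctrans W \in unitmx.
Proof. by move=> hW; rewrite /ctrans map_unitmx unitmx_tr. Qed.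

Lemma inW_unitmx cw W : inW cw W -> W \in unitmx.
Proof.
by case: cw => /= [[_ /mulmx1_unit [_ ->]]|/mulmx1_unit [_ ->]|[]|].
Qed.

Lemma congr_mulmx_invmx M W (v : 'cV[C]_n) :
  W \in unitmx -> M *m v = 0 -> ctrans W *m M *m W *m (invmx W *m v) = 0.
Proof.
by move=> hW hv; rewrite -!mulmxA (mulmxA W) mulmxV // mul1mx hv !mulmx0.
Qed.

Lemma bdiag_congr_mulmx tau M W (D : 'M[C]_n) :
  bdiag tau D -> bdiag tau (ctrans W *m M *m W) ->
  bdiag tau (ctrans (W *m D) *m M *m (W *m D)).
Proof.
move=> hD hWMW; rewrite ctransM !mulmxA -(mulmxA (ctrans D)).
rewrite -(mulmxA (ctrans D) (ctrans W *m M)).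
by do 2?apply: bdiag_mul => //; apply: bdiag_ctrans.
Qed.

Lemma bdiag_Pmat_congr tau p (A : 'I_p.+1 -> 'M[C]_n) W lam :
  (forall i, bdiag tau (ctrans W *m A i *m W)) ->
  bdiag tau (ctrans W *m Pmat A lam *m W).
Proof.
move=> hA r c hrc; rewrite /Pmat mulmx_sumr mulmx_suml summxE big1 // => k _.
by rewrite -scalemxAr -scalemxAl mxE hA ?mulr0.
Qed.

Lemma geom_mult_corank p (A : 'I_p.+1 -> 'M[C]_n) W lam :
  W \in unitmx ->
  (n - \rank (ctrans W *m Pmat A lam *m W))%N = geom_mult A lam.
Proof.
by move=> hW; rewrite mxrank_unit_mul ?ctrans_unitmx // -mxrank_coker.
Qed.

End Congruence.

Theorem theorem3p1 (C : numClosedFieldType) (ca : Aclass) (cw : Wclass)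
  (n p : nat) (A : 'I_p.+1 -> 'M[C]_n)
  (lam : 'I_n -> C) (x : 'I_n -> 'cV[C]_n)
  (tau : seq nat) (W : 'M[C]_n) :
  (forall i, inA ca (A i)) ->
  (forall j, eigenpair A (lam j) (x j)) ->
  let X := \matrix_(r < n, j < n) x j r 0 in
  X \in unitmx ->
  (forall j, geom_mult A (lam j) = 1%N) ->
  GJBD_sol cw A tau W ->
  exists Pi : 'M[C]_n, exists D : 'M[C]_n,
    [/\ is_perm_matrix Pi, bdiag tau D, D \in unitmx,
        W *m D = X *m Pi &
        forall i, bdiag tau (ctrans (X *m Pi) *m A i *m (X *m Pi))].
Proof.
move=> _ heig X hX hgm [_ [/inW_unitmx hW hWA] _].
pose Y := invmx W *m X.
have hY : Y \in unitmx by rewrite unitmx_mul unitmx_inv hW hX.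
have col_in_block j i i' : Y i j != 0 -> Y i' j != 0 -> blk tau i = blk tau i'.
  have colY : col j Y = invmx W *m x j.
    by rewrite colE -mulmxA -colE; congr (_ *m _); apply/matrixP => r c;
      rewrite ord1 !mxE.
  have [_ _ /(congr_mulmx_invmx hW)] := heig j; rewrite -colY => hker.
  move=> Yij Yi'j; apply: (bdiag_ker_rank1_block _ _ hker).
  - exact: bdiag_Pmat_congr.
  - by rewrite geom_mult_corank // hgm.
  - by rewrite mxE.
  - by rewrite mxE.
have [s hs] := unitmx_perm_support hY.
have hWD : W *m col_perm s Y = X *m perm_mx s^-1.
  by rewrite col_permE !mulmxA mulmxV // mul1mx.
have hD := bdiag_col_perm col_in_block hs.
exists (perm_mx s^-1), (col_perm s Y); split => //.
- by exists s^-1%g.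
- by rewrite col_permE unitmx_mul hY unitmx_perm.
- by move=> i; rewrite -hWD; apply: bdiag_congr_mulmx.
Qed.
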